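(* Fix $b\in\mathbb{N}$ and let $S$ be a subset of $\mathbb{N}$. Then \[ \lim_{N\to\infty}\frac{|\{(r,s)\in\mathbb{N}\times\mathbb{N} : 0<r,s\le N,\ \gcd_b(r,s)\in S\}|}{N^2}=\frac{\zeta_S(b+1)}{\zeta(b+1)}, \] where $\zeta_S(b+1)=\sum_{k\in S}k^{-(b+1)}$ and $\zeta$ is the Riemann zeta function.
   Context: For $b\in\mathbb{N}$ and $r,s\in\mathbb{N}$, $\gcd_b(r,s)=\max\{k\in\mathbb{N} : k\mid r \text{ and } k^b\mid s\}$. *)

From mathcomp Require Import all_boot all_order all_algebra.
From mathcomp Require Import all_classical all_reals all_analysis.
Set Implicit Arguments. Unset Strict Implicit. Unset Printing Implicit Defensive.
Import Order.TTheory GRing.Theory Num.Theory.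
Import numFieldNormedType.Exports.
Local Open Scope ring_scope.
Local Open Scope classical_set_scope.

(* gcd_b(r,s) = max { k : k | r and k^b | s }.  For r > 0 every such k
   satisfies k <= r, so the max over k in [0, r] is the max of the set. *)
Definition gcdb (b r s : nat) : nat :=
  (\max_(k < r.+1 | (k %| r) && (k ^ b %| s)) k)%N.

Definition count_gcdb (b : nat) (S : set nat) (N : nat) : nat :=
  #|[set p : 'I_N.+1 * 'I_N.+1 |
      [&& (0 < p.1)%N, (0 < p.2)%N & gcdb b p.1 p.2 \in S]]|.

Definition zetaS (R : realType) (S : set nat) (n : nat) : R :=
  limn (fun N : nat => (\sum_(1 <= k < N | k \in S) (k%:R : R) ^- n : R)).

Definition zeta (R : realType) (n : nat) : R :=
  limn (fun N : nat => (\sum_(1 <= k < N) (k%:R : R) ^- n : R)).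

From mathcomp Require Import all_boot all_order all_algebra.
From mathcomp Require Import all_classical all_reals all_analysis.
From mathcomp Require Import ring lra.
Import Order.TTheory GRing.Theory Num.Theory.
Import numFieldNormedType.Exports.
Local Open Scope ring_scope.
Local Open Scope classical_set_scope.

(* A pair (r, s) has d | gcd_b(r, s) iff d | r and d^b | s, so [1, N]^2 holds
   exactly floor(N/d) floor(N/d^b) ~ N^2 / d^(b+1) such pairs.  Moebius
   inversion counts the pairs with gcd_b(r, s) = k as
   sum_m mu(m) floor(N/km) floor(N/(km)^b), whose terms are O(N^2 / m^2), so by
   Tannery's theorem their density is c / k^(b+1), with c = sum_m mu(m) / m^(b+1).
   Summing over k in S, again dominated by 1 / k^2, gives the density
   c zeta_S(b+1); for S = nat every pair is counted, hence c = 1 / zeta(b+1). *)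

Lemma lcmn_expn m n e : (0 < m)%N -> (0 < n)%N ->
  lcmn (m ^ e) (n ^ e) = (lcmn m n ^ e)%N.
Proof.
move=> m_gt0 n_gt0; have mn_gt0 : (0 < lcmn m n)%N by rewrite lcmn_gt0 m_gt0.
apply: eqn_from_log => [||p]; rewrite ?lcmn_gt0 ?expn_gt0 ?m_gt0 ?n_gt0 ?mn_gt0 //=.
by rewrite logn_lcm ?expn_gt0 ?m_gt0 ?n_gt0 // !lognX logn_lcm // maxnMr.
Qed.

Section Gcdb.
Local Open Scope nat_scope.
Variables (b r s : nat).
Hypothesis r_gt0 : 0 < r.

Lemma gcdb_spec : (gcdb b r s %| r) && (gcdb b r s ^ b %| s).
Proof.
have one_ok : (fun k : 'I_r.+1 => (k %| r) && (k ^ b %| s)) (Ordinal (r_gt0 : 1 < r.+1)).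
  by rewrite /= dvd1n exp1n dvd1n.
by rewrite /gcdb (bigop.bigmax_eq_arg (Ordinal (r_gt0 : 1 < r.+1)) one_ok); case: arg_maxnP.
Qed.

Lemma leq_gcdb k : k %| r -> k ^ b %| s -> k <= gcdb b r s.
Proof.
move=> kr ks; have k_lt : k < r.+1 by rewrite ltnS dvdn_leq.
apply: (@bigop.leq_bigmax_cond _ _ (fun k : 'I_r.+1 => k : nat) (Ordinal k_lt)).
by rewrite /= kr.
Qed.

Lemma gcdb_gt0 : 0 < gcdb b r s.
Proof. by apply: leq_gcdb; rewrite ?exp1n dvd1n. Qed.

Lemma gcdb_leq : gcdb b r s <= r.
Proof. by case/andP: gcdb_spec => /(dvdn_leq r_gt0). Qed.

(* The common divisors in the sense of [gcdb] are closed under [lcmn], so the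
   largest one is a multiple of all the others. *)
Lemma dvdn_gcdb k : (k %| gcdb b r s) = (k %| r) && (k ^ b %| s).
Proof.
have /andP[gr gs] := gcdb_spec; apply/idP/andP => [kg | [kr ks]].
  by rewrite (dvdn_trans kg gr) (dvdn_trans (dvdn_exp2r b kg) gs).
have k_gt0 : 0 < k := dvdn_gt0 r_gt0 kr.
have lr : lcmn k (gcdb b r s) %| r by rewrite dvdn_lcm kr.
have ls : lcmn k (gcdb b r s) ^ b %| s by rewrite -lcmn_expn ?gcdb_gt0 // dvdn_lcm ks.
have <- : lcmn k (gcdb b r s) = gcdb b r s.
  apply/eqP; rewrite eqn_leq leq_gcdb // dvdn_leq ?dvdn_lcmr //.
  by rewrite lcmn_gt0 k_gt0 gcdb_gt0.
exact: dvdn_lcml.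
Qed.

End Gcdb.

Section Moebius.
Variable R : numDomainType.

Definition moebius (n : nat) : R :=
  if (0 < n)%N && all (fun p => logn p n == 1%N) (primes n)
  then (-1) ^+ size (primes n) else 0.

Lemma moebius0 : moebius 0 = 0. Proof. by []. Qed.

Lemma moebius1 : moebius 1 = 1. Proof. by []. Qed.

Lemma norm_moebius_le1 n : `|moebius n| <= 1.
Proof.
by rewrite /moebius; case: ifP => _; rewrite ?normr0 // normrX normrN1 expr1n.
Qed.

Lemma moebiusMp m p : prime p -> ~~ (p %| m)%N -> (0 < m)%N ->
  moebius (m * p) = - moebius m.
Proof.
move=> p_pr pNm m_gt0; have p_gt0 := prime_gt0 p_pr.
have mp_gt0 : (0 < m * p)%N by rewrite muln_gt0 m_gt0.
have primesMp : perm_eq (primes (m * p)) (p :: primes m).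
  apply: uniq_perm; rewrite ?primes_uniq //=.
    by rewrite primes_uniq mem_primes (negbTE pNm) !andbF.
  by move=> q; rewrite primesM // (primes_prime p_pr) !inE orbC.
have lognMp q : q \in primes m -> logn q (m * p) = logn q m.
  rewrite mem_primes => /and3P[q_pr _ qm]; rewrite lognM // (logn_prime q p_pr).
  have /negbTE -> : q != p by apply: contraNneq pNm => <-.
  exact: addn0.
rewrite /moebius (perm_size primesMp) (eq_all_r (perm_mem primesMp)) mp_gt0 m_gt0 /=.
have lognpm : logn p m = 0%N by rewrite logn_coprime // prime_coprime.
rewrite lognM // (logn_prime p p_pr) eqxx lognpm /=.
rewrite (eq_in_all (fun q qm => congr1 (eq_op^~ 1%N) (lognMp q qm))).
by case: ifP => _; rewrite ?oppr0 // exprS mulN1r.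
Qed.

Lemma moebius_sqr_dvd m p : prime p -> (p * p %| m)%N -> moebius m = 0.
Proof.
move=> p_pr ppm; rewrite /moebius; have [->|m_gt0] //= := posnP m.
have pm : p \in primes m by rewrite mem_primes p_pr m_gt0 (dvdn_trans (dvdn_mulr p _) ppm).
have : (2 <= logn p m)%N by rewrite -pfactor_dvdn // expn2.
by case: allP => // /(_ p pm)/eqP ->.
Qed.

Section Flip.
Variables (p t : nat).
Hypotheses (p_pr : prime p) (pt : (p %| t)%N).

(* An involution of the divisors of [t] reversing the sign of [moebius]; its
   fixed points, the multiples of [p * p], are where [moebius] vanishes. *)
Definition flip_p (m : nat) : nat :=
  if (p * p %| m)%N then m else if (p %| m)%N then (m %/ p)%N else (m * p)%N.

Lemma flip_pK : involutive flip_p.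
Proof.
move=> m; have p_gt0 := prime_gt0 p_pr.
rewrite [flip_p m]/flip_p; case: ifP => [ppm | ppNm]; first by rewrite /flip_p ppm.
case: ifPn => [pm | pNm]; rewrite /flip_p; last first.
  by rewrite dvdn_pmul2r // (negbTE pNm) dvdn_mull // mulnK.
have pNmp : ~~ (p %| m %/ p)%N by rewrite -(dvdn_pmul2r p_gt0) divnK ?ppNm.
have ppNmp : ~~ (p * p %| m %/ p)%N.
  by apply: contra pNmp; apply: dvdn_trans; apply: dvdn_mulr.
by rewrite (negbTE ppNmp) (negbTE pNmp) divnK.
Qed.

Lemma flip_p_dvd m : (m %| t)%N -> (flip_p m %| t)%N.
Proof.
rewrite /flip_p => mt; case: ifP => // _; case: ifPn => [pm|pNm].
  exact: dvdn_trans (dvdn_div pm) mt.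
by rewrite Gauss_dvd ?mt // coprime_sym prime_coprime.
Qed.

Lemma moebius_flip_p m : (0 < m)%N -> moebius (flip_p m) = - moebius m.
Proof.
rewrite /flip_p => m_gt0; case: ifP => [ppm | ppNm].
  by rewrite (moebius_sqr_dvd _ _ p_pr ppm) oppr0.
case: ifPn => [pm|pNm]; last exact: moebiusMp.
have pNmp : ~~ (p %| m %/ p)%N by rewrite -(dvdn_pmul2r (prime_gt0 p_pr)) divnK ?ppNm.
rewrite -{2}(divnK pm) moebiusMp ?opprK // divn_gt0 ?prime_gt0 // dvdn_leq //.
Qed.

End Flip.

Lemma sum_moebius_divisors t : (0 < t)%N ->
  \sum_(m <- divisors t) moebius m = (t == 1)%N%:R.
Proof.
move=> t_gt0; have [|t_gt1|->] := ltngtP t 1; last by rewrite big_seq1 moebius1.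
  by rewrite ltnS leqn0 (gtn_eqF t_gt0).
set p := pdiv t; have p_pr : prime p := pdiv_prime t_gt1.
have pt : (p %| t)%N := pdiv_dvd t.
have flip_perm : perm_eq (divisors t) (map (flip_p p) (divisors t)).
  have flip_inj := inv_inj (flip_pK _ p_pr).
  apply: uniq_perm; rewrite ?(map_inj_uniq flip_inj) ?divisors_uniq //.
  move=> m; apply/idP/mapP => [mt | [m' m't ->]].
    exists (flip_p p m); last by rewrite flip_pK.
    by rewrite -dvdn_divisors // (flip_p_dvd _ _ p_pr pt) // dvdn_divisors.
  by rewrite -dvdn_divisors // (flip_p_dvd _ _ p_pr pt) // dvdn_divisors.
have sumN : \sum_(m <- divisors t) moebius m = - \sum_(m <- divisors t) moebius m.
  rewrite {1}(perm_big _ flip_perm) big_map -sumrN; apply: eq_big_seq => m.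
  by rewrite -dvdn_divisors // => /(dvdn_gt0 t_gt0) /(moebius_flip_p _ p_pr).
have : (\sum_(m <- divisors t) moebius m) *+ 2 == 0 by rewrite mulr2n {2}sumN subrr.
by rewrite mulrn_eq0 mulr0n => /eqP.
Qed.

End Moebius.

Lemma sum_ord_dvdn (V : nmodType) (F : nat -> V) t n : (0 < t)%N -> (t <= n)%N ->
  \sum_(m < n.+1 | (m %| t)%N) F m = \sum_(m <- divisors t) F m.
Proof.
move=> t_gt0 tn; rewrite -(big_mkord (dvdn^~ t)) -big_filter.
have dvd_iota : [seq m <- index_iota 0 n.+1 | (m %| t)%N] =i divisors t.
  move=> m; rewrite mem_filter mem_iota -dvdn_divisors //.
  case: (boolP (m %| t)%N) => //= mt.
  by rewrite ltnS (leq_trans (dvdn_leq t_gt0 mt) tn).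
have uniq_dvd_iota := filter_uniq (dvdn^~ t) (iota_uniq 0 n.+1).
by rewrite (perm_big (divisors t) (uniq_perm uniq_dvd_iota (divisors_uniq t) dvd_iota)).
Qed.

Lemma sum_moebius_dvdn (R : numDomainType) k g n :
  (0 < k)%N -> (0 < g)%N -> (g <= n)%N ->
  \sum_(m < n.+1) moebius R m * (k * m %| g)%N%:R = (g == k)%N%:R.
Proof.
move=> k_gt0 g_gt0 gn; have [/dvdnP[t def_g] | kNg] := boolP (k %| g)%N; last first.
  rewrite big1 => [|m _]; last first.
    by rewrite (contraNF (dvdn_trans (dvdn_mulr m (dvdnn k)))) ?mulr0.
  by case: eqP kNg => // ->; rewrite dvdnn.
rewrite {}def_g in g_gt0 gn *.
have t_gt0 : (0 < t)%N by rewrite muln_gt0 in g_gt0; case/andP: g_gt0.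
have tn : (t <= n)%N by apply: leq_trans gn; rewrite leq_pmulr.
rewrite -[X in (_ == X)%N]mul1n eqn_pmul2r // (mulnC t).
under eq_bigr => m _ do rewrite dvdn_pmul2l // mulr_natr mulrb.
by rewrite -big_mkcond /= sum_ord_dvdn // sum_moebius_divisors.
Qed.

Section RealLimits.
Variable R : realType.
Implicit Types u h : R ^nat.

Lemma norm_sum_tail_le u h K n : (forall k, `|u k| <= h k) -> cvgn (series h) ->
  (K <= n)%N -> `|\sum_(K <= k < n) u k| <= limn (series h) - series h K.
Proof.
move=> uh hc Kn; have h_ge0 k : 0 <= h k := le_trans (normr_ge0 _) (uh k).
apply: le_trans (ler_norm_sum _ _ _) _; apply: le_trans (ler_sum _ (fun k _ => uh k)) _.
rewrite -sub_series_geq // lerD2r; apply: nondecreasing_cvgn_le => //.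
exact: (nondecreasing_series (P := xpredT) (m := 0%N)).
Qed.

Lemma cvg_series_dominated u h : (forall k, `|u k| <= h k) -> cvgn (series h) ->
  cvgn (series u).
Proof.
move=> uh hc; have h_ge0 k : 0 <= h k := le_trans (normr_ge0 _) (uh k).
by apply/normed_cvg/(series_le_cvg _ h_ge0 uh hc) => k; rewrite normr_ge0.
Qed.

Lemma norm_lim_series_tail_le u h K : (forall k, `|u k| <= h k) -> cvgn (series h) ->
  `|limn (series u) - series u K| <= limn (series h) - series h K.
Proof.
move=> uh hc; have uc := cvg_series_dominated _ _ uh hc.
apply: (ler_cvg_to (cvg_norm (cvgB uc (cvg_cst (series u K)))) (cvg_cst _)).
by exists K => // n /= Kn; rewrite !fctE sub_series_geq // norm_sum_tail_le.
Qed.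

Theorem cvg_sum_dominated (f : nat -> R ^nat) g h :
  (forall k, (fun N => f N k) @ \oo --> g k) -> (forall N k, `|f N k| <= h k) ->
  cvgn (series h) -> (fun N => \sum_(k < N.+1) f N k) @ \oo --> limn (series g).
Proof.
move=> fg fh hc.
have gh k : `|g k| <= h k.
  by apply: (ler_cvg_to (cvg_norm (fg k)) (cvg_cst _)); apply: nearW => N; apply: fh.
have tail0 : (fun K => limn (series h) - series h K) @ \oo --> 0.
  by rewrite -(subrr (limn (series h))); apply: cvgB => //; apply: cvg_cst.
apply/cvgrPdist_le => e e_gt0; have e3_gt0 : 0 < e / 3 by rewrite divr_gt0.
have [K _ tailK] := (cvgrPdist_le _ _).1 tail0 _ e3_gt0.
have {tailK} tailK : limn (series h) - series h K <= e / 3.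
  by apply: le_trans (tailK K (leqnn K)); rewrite sub0r normrN ler_norm.
have fgK : (fun N => \sum_(k < K) f N k) @ \oo --> \sum_(k < K) g k.
  by apply: cvg_big => //; apply: add_continuous.
have [M _ headM] := (cvgrPdist_le _ _).1 fgK _ e3_gt0.
exists (maxn K M) => // N /=; rewrite geq_max => /andP[KN MN].
rewrite -(big_mkord xpredT) (big_cat_nat _ (leqW KN)) //= big_mkord.
have -> : limn (series g) - (\sum_(k < K) f N k + \sum_(K <= k < N.+1) f N k)
    = (limn (series g) - series g K) + (series g K - \sum_(k < K) f N k)
      - \sum_(K <= k < N.+1) f N k by ring.
rewrite [e](_ : _ = e / 3 + e / 3 + e / 3); last by field.
apply: le_trans (ler_normB _ _) _; apply: lerD; first apply: le_trans (ler_normD _ _) _.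
- apply: lerD; last by rewrite seriesEord; exact: headM.
  exact: le_trans (norm_lim_series_tail_le _ _ K gh hc) tailK.
- exact: le_trans (norm_sum_tail_le _ _ _ _ (fh N) hc (leqW KN)) tailK.
Qed.

Lemma cvg_series_inv_sqr : cvgn (series (fun k : nat => ((k ^ 2)%:R : R)^-1)).
Proof.
set h := fun k : nat => _.
have h_ge0 k : 0 <= h k by rewrite /h invr_ge0.
(* [1 / (n+2)^2 <= 1 / (n+1) - 1 / (n+2)] makes the partial sums telescope. *)
have series_le n : series h n.+2 <= 2 - (n.+1%:R)^-1.
  elim: n => [|n IHn]; first by rewrite /series /= big_nat_recr //= big_nat1 /h; lra.
  have telescope_step : h n.+2 <= (n.+1%:R)^-1 - (n.+2%:R)^-1.
    have -> : (n.+1%:R : R)^-1 - (n.+2%:R)^-1 = ((n.+1 * n.+2)%:R)^-1.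
      have n_ge0 : (0 : R) <= n%:R := ler0n R n.
      by rewrite -[n.+2]addn1 natrM natrD; field; apply/andP; split; apply: lt0r_neq0; lra.
    by rewrite /h lef_pV2 ?posrE ?ltr0n ?muln_gt0 ?expn_gt0 // ler_nat leq_mul2r leqnSn orbT.
  by rewrite seriesS addrC; apply: le_trans (lerD IHn telescope_step) _; rewrite addrA subrK.
apply: nondecreasing_is_cvgn; first exact: (nondecreasing_series (P := xpredT) (m := 0%N)).
exists 2 => _ [n _ <-]; apply: le_trans (_ : series h n.+2 <= _).
  by apply: (nondecreasing_series (P := xpredT) (m := 0%N)) => //; apply: leqW.
by apply: le_trans (series_le n) _; rewrite gerDl oppr_le0 invr_ge0.
Qed.

Lemma divn_div_le N a : (0 < a)%N -> (N %/ a)%:R / N%:R <= (a%:R : R)^-1.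
Proof.
move=> a_gt0; have [->|N_gt0] := posnP N; first by rewrite invr0 mulr0 invr_ge0.
rewrite ler_pdivrMr ?ltr0n // ler_pdivlMl ?ltr0n // -natrM ler_nat mulnC.
exact: leq_divM.
Qed.

Lemma cvg_divn_div a : (0 < a)%N -> (fun N => (N %/ a)%:R / N%:R : R) @ \oo --> (a%:R : R)^-1.
Proof.
move=> a_gt0; rewrite -cvg_shiftS /=.
apply: (squeeze_cvgr (f := fun N => a%:R^-1 - harmonic N) (h := cst a%:R^-1)).
- apply: nearW => N; rewrite divn_div_le // andbT /harmonic /=.
  set q := (N.+1 %/ a)%N; have ceil_q : (N.+1%:R : R) <= (q%:R + 1) * a%:R.
    by rewrite natr1 -natrM ler_nat ltnW // ltn_ceil.
  have [a_pos N_pos] : (0 : R) < a%:R /\ (0 : R) < N.+1%:R by rewrite !ltr0n.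
  rewrite -subr_ge0 (_ : _ - _ = ((q%:R + 1) * a%:R - N.+1%:R) / (a%:R * N.+1%:R)).
    by rewrite divr_ge0 ?subr_ge0 // mulr_ge0 // ltW.
  by field; rewrite !lt0r_neq0.
- by rewrite -[X in _ --> X]subr0; apply: cvgB; [exact: cvg_cst | exact: cvg_harmonic].
- exact: cvg_cst.
Qed.

End RealLimits.

Lemma sum_multiples N d : (0 < d)%N ->
  (\sum_(r < N.+1) ((0 < r) && (d %| r)) = N %/ d)%N.
Proof.
move=> d_gt0; elim: N => [|N IHN]; first by rewrite big_ord1 div0n.
by rewrite big_ord_recr /= IHN (divnS _ d_gt0) addnC.
Qed.

Section PairsGcdb.
Variable b : nat.

Definition pairs_gcdb (N : nat) (P : pred nat) : nat :=
  (\sum_(r < N.+1) \sum_(s < N.+1) [&& 0 < r, 0 < s & P (gcdb b r s)])%N.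

Lemma count_gcdbE S N : count_gcdb b S N = pairs_gcdb N (fun k => k \in S).
Proof.
rewrite /count_gcdb /pairs_gcdb -sum1_card big_mkcond pair_big /=.
apply: eq_bigr => -[r s] _.
rewrite (_ : (_ \in _) = [&& (0 < r)%N, (0 < s)%N & gcdb b r s \in S]); first by case: ifP.
by apply/idP/idP => [/set_mem | /mem_set].
Qed.

Lemma leq_pairs_gcdb N (P Q : pred nat) : subpred P Q ->
  (pairs_gcdb N P <= pairs_gcdb N Q)%N.
Proof.
move=> PQ; apply: leq_sum => r _; apply: leq_sum => s _.
by case: and3P => // -[-> -> /PQ ->].
Qed.

Lemma pairs_gcdb_dvd N d : (0 < d)%N -> pairs_gcdb N (dvdn d) = (N %/ d * (N %/ d ^ b))%N.
Proof.
move=> d_gt0; have db_gt0 : (0 < d ^ b)%N by rewrite expn_gt0 d_gt0.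
rewrite -(sum_multiples N _ d_gt0) -(sum_multiples N _ db_gt0).
rewrite big_distrlr; apply: eq_bigr => r _; apply: eq_bigr => s _ /=.
have [->|r_gt0] //= := posnP r.
by rewrite dvdn_gcdb // mulnb andbCA.
Qed.

Lemma pairs_gcdb_eq0 N : pairs_gcdb N (pred1 0%N) = 0%N.
Proof.
apply: big1 => r _; apply: big1 => s _.
by have [->|r_gt0] //= := posnP r; rewrite gtn_eqF ?andbF // gcdb_gt0.
Qed.

Lemma pairs_gcdb_partition N (P : pred nat) :
  pairs_gcdb N P = (\sum_(k < N.+1 | P k) pairs_gcdb N (pred1 (k : nat)))%N.
Proof.
rewrite /pairs_gcdb [RHS]exchange_big; apply: eq_bigr => r _.
rewrite [RHS]exchange_big; apply: eq_bigr => s _ /=.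
have [->|r_gt0] := posnP r; first by rewrite big1.
have [->|s_gt0] := posnP s; first by rewrite big1 // => k; rewrite andbF.
have g_lt : (gcdb b r s < N.+1)%N.
  by rewrite ltnS (leq_trans (gcdb_leq b r s r_gt0)) // -ltnS.
rewrite big_mkcond (bigD1 (Ordinal g_lt)) //= eqxx big1 ?addn0 => [|k kNg].
  by case: (P _).
by rewrite eq_sym -[_ == _]/(val k == val (Ordinal g_lt)) val_eqE (negbTE kNg) if_same.
Qed.

Lemma pairs_gcdb_moebius (R : numDomainType) N k : (0 < k)%N ->
  (pairs_gcdb N (pred1 k))%:R =
  \sum_(m < N.+1) moebius R m * (pairs_gcdb N (dvdn (k * m)))%:R.
Proof.
move=> k_gt0; under eq_bigr do rewrite natr_sum mulr_sumr.
rewrite natr_sum exchange_big; apply: eq_bigr => r _.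
under eq_bigr do rewrite natr_sum mulr_sumr.
rewrite natr_sum exchange_big; apply: eq_bigr => s _ /=.
have [->|r_gt0] := posnP r; first by rewrite big1 // => m; rewrite mulr0.
have [->|s_gt0] := posnP s; first by rewrite big1 // => m; rewrite andbF mulr0.
rewrite /= sum_moebius_dvdn ?gcdb_gt0 //.
by rewrite (leq_trans (gcdb_leq b r s r_gt0)) // -ltnS.
Qed.

End PairsGcdb.

Lemma lef_natrV (R : numFieldType) a c : (0 < a)%N -> (a <= c)%N -> (c%:R : R)^-1 <= (a%:R)^-1.
Proof.
by move=> a_gt0 ac; rewrite lef_pV2 ?ler_nat // posrE ltr0n // (leq_trans a_gt0).
Qed.

Lemma lef_natrV_expn (R : numFieldType) m e1 e2 : (0 < e1)%N -> (e1 <= e2)%N ->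
  ((m ^ e2)%:R : R)^-1 <= ((m ^ e1)%:R)^-1.
Proof.
move=> e1_gt0 e12; have [->|m_gt0] := posnP m; first by rewrite !exp0n ?(leq_trans e1_gt0).
by rewrite lef_natrV ?expn_gt0 ?m_gt0 // leq_pexp2l.
Qed.

Definition moebius_series (R : realType) (e : nat) : R :=
  limn (series (fun m => moebius R m / (m ^ e)%:R)).

Lemma zetaSE (R : realType) S n : (0 < n)%N ->
  zetaS R S n = limn (series (fun k => (k \in S)%:R / (k ^ n)%:R : R)).
Proof.
move=> n_gt0; congr (limn _); apply/funext => N; rewrite /series /=.
case: N => [|N]; first by rewrite !big_geq.
rewrite big_ltn // exp0n // invr0 mulr0 add0r big_mkcond /=.
by apply: eq_bigr => k _; rewrite natrX; case: (k \in S); rewrite ?mul1r ?mul0r.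
Qed.

Lemma zeta_setT (R : realType) n : zeta R n = zetaS R setT n.
Proof. by congr (limn _); apply/funext => N; apply: eq_bigl => k; rewrite in_setT. Qed.

Section Densities.
Variables (R : realType) (b : nat).
Hypothesis b_gt0 : (0 < b)%N.

Let inv_sqr (k : nat) : R := ((k ^ 2)%:R)^-1.

Lemma pairs_gcdb_dvd_density N d : (0 < d)%N ->
  (pairs_gcdb b N (dvdn d))%:R / N%:R ^+ 2 =
  (N %/ d)%:R / N%:R * ((N %/ d ^ b)%:R / N%:R) :> R.
Proof. by move=> d_gt0; rewrite pairs_gcdb_dvd // natrM expr2 invfM mulrACA. Qed.

Lemma pairs_gcdb_dvd_density_le N d : (0 < d)%N ->
  (pairs_gcdb b N (dvdn d))%:R / N%:R ^+ 2 <= inv_sqr d.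
Proof.
move=> d_gt0; have db_gt0 : (0 < d ^ b)%N by rewrite expn_gt0 d_gt0.
rewrite pairs_gcdb_dvd_density // /inv_sqr natrX expr2 invfM.
apply: ler_pM; rewrite ?divr_ge0 ?divn_div_le //.
apply: le_trans (divn_div_le _ _ _ db_gt0) _.
by rewrite -{2}(expn1 d) lef_natrV_expn.
Qed.

Lemma cvg_pairs_gcdb_dvd_density d : (0 < d)%N ->
  (fun N => (pairs_gcdb b N (dvdn d))%:R / N%:R ^+ 2 : R) @ \oo --> ((d ^ b.+1)%:R : R)^-1.
Proof.
move=> d_gt0; have db_gt0 : (0 < d ^ b)%N by rewrite expn_gt0 d_gt0.
under eq_cvg do rewrite pairs_gcdb_dvd_density //.
by rewrite expnS natrM invfM; apply: cvgM; apply: cvg_divn_div.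
Qed.

Lemma norm_moebius_div_le m : `|moebius R m / (m ^ b.+1)%:R| <= inv_sqr m.
Proof.
rewrite /inv_sqr normrM normfV normr_nat.
apply: le_trans (lef_natrV_expn R m 2 b.+1 isT b_gt0).
by rewrite ler_piMl ?invr_ge0 // norm_moebius_le1.
Qed.

Lemma cvg_pairs_gcdb_density k : (0 < k)%N ->
  (fun N => (pairs_gcdb b N (pred1 k))%:R / N%:R ^+ 2 : R) @ \oo -->
  ((k ^ b.+1)%:R : R)^-1 * moebius_series R b.+1.
Proof.
move=> k_gt0.
have moebius_cvg := cvg_series_dominated _ _ _ norm_moebius_div_le (cvg_series_inv_sqr R).
have -> : ((k ^ b.+1)%:R : R)^-1 * moebius_series R b.+1 =
    limn (series (fun m => moebius R m * ((k * m) ^ b.+1)%:R^-1)).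
  rewrite -[LHS]/(_ *: _) -lim_seriesZ //; congr (limn (series _)); apply/funext => m.
  by rewrite /= expnMn natrM invfM mulrCA.
have -> : (fun N => (pairs_gcdb b N (pred1 k))%:R / N%:R ^+ 2 : R) = fun N =>
    \sum_(m < N.+1) moebius R m * ((pairs_gcdb b N (dvdn (k * m)))%:R / N%:R ^+ 2).
  apply/funext => N; rewrite pairs_gcdb_moebius // mulr_suml.
  by under eq_bigr do rewrite -mulrA.
apply: (@cvg_sum_dominated R
  (fun N m => moebius R m * ((pairs_gcdb b N (dvdn (k * m)))%:R / N%:R ^+ 2))
  (fun m => moebius R m * ((k * m) ^ b.+1)%:R^-1) _ _ _ (cvg_series_inv_sqr R)) => [m | N m].
  have [->|m_gt0] := posnP m.
    by under eq_cvg do rewrite moebius0 mul0r; rewrite moebius0 mul0r; apply: cvg_cst.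
  by apply: cvgMl_tmp; apply: cvg_pairs_gcdb_dvd_density; rewrite muln_gt0 k_gt0.
have [->|m_gt0] := posnP m; first by rewrite moebius0 mul0r normr0 invr_ge0.
have km_gt0 : (0 < k * m)%N by rewrite muln_gt0 k_gt0.
rewrite normrM [X in _ * X]ger0_norm ?divr_ge0 // -[X in _ <= X]mul1r.
apply: ler_pM; rewrite ?divr_ge0 ?norm_moebius_le1 //.
apply: le_trans (pairs_gcdb_dvd_density_le N _ km_gt0) _.
by rewrite lef_natrV ?expn_gt0 ?m_gt0 // leq_exp2r // leq_pmull.
Qed.

Lemma cvg_count_gcdb_density S :
  (fun N => (count_gcdb b S N)%:R / N%:R ^+ 2 : R) @ \oo -->
  moebius_series R b.+1 * zetaS R S b.+1.
Proof.
have indicator_le k : `|(k \in S)%:R / (k ^ b.+1)%:R| <= inv_sqr k.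
  rewrite normrM normfV !normr_nat; apply: le_trans (lef_natrV_expn R k 2 b.+1 isT b_gt0).
  by rewrite ler_piMl ?invr_ge0 // lern1 leq_b1.
have -> : (fun N => (count_gcdb b S N)%:R / N%:R ^+ 2 : R) = fun N =>
    \sum_(k < N.+1) ((k : nat) \in S)%:R * ((pairs_gcdb b N (pred1 (k : nat)))%:R / N%:R ^+ 2).
  apply/funext => N; rewrite count_gcdbE pairs_gcdb_partition natr_sum mulr_suml big_mkcond.
  by apply: eq_bigr => k _; case: (_ \in _); rewrite ?mul1r ?mul0r.
have -> : moebius_series R b.+1 * zetaS R S b.+1 =
    limn (series (fun k => (k \in S)%:R * ((k ^ b.+1)%:R^-1 * moebius_series R b.+1))).
  rewrite zetaSE // -[LHS]/(_ *: _) -lim_seriesZ; last first.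
    exact: cvg_series_dominated _ _ _ indicator_le (cvg_series_inv_sqr R).
  by congr (limn (series _)); apply/funext => k; rewrite !fctE -[_ *: _]/(_ * _); ring.
apply: (@cvg_sum_dominated R
  (fun N k => (k \in S)%:R * ((pairs_gcdb b N (pred1 k))%:R / N%:R ^+ 2))
  (fun k => (k \in S)%:R * ((k ^ b.+1)%:R^-1 * moebius_series R b.+1)) _ _ _
  (cvg_series_inv_sqr R)) => [k | N k].
  have [->|k_gt0] := posnP k; last by apply: cvgMl_tmp; apply: cvg_pairs_gcdb_density.
  under eq_cvg do rewrite pairs_gcdb_eq0 mul0r mulr0.
  by rewrite exp0n // invr0 mul0r mulr0; apply: cvg_cst.
have [->|k_gt0] := posnP k; first by rewrite pairs_gcdb_eq0 mul0r mulr0 normr0 invr_ge0.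
rewrite normrM [X in _ * X]ger0_norm ?divr_ge0 // -[X in _ <= X]mul1r.
apply: ler_pM; rewrite ?divr_ge0 ?normr_nat ?lern1 ?leq_b1 //.
apply: le_trans (pairs_gcdb_dvd_density_le N _ k_gt0).
rewrite ler_wpM2r ?invr_ge0 ?exprn_ge0 // ler_nat.
by apply: leq_pairs_gcdb => g /eqP ->.
Qed.

End Densities.

Lemma count_gcdb_setT b N : count_gcdb b setT N = (N ^ 2)%N.
Proof.
rewrite count_gcdbE (_ : (fun k => k \in setT) = dvdn 1).
  by rewrite pairs_gcdb_dvd // exp1n !divn1.
by apply/funext => k; rewrite in_setT dvd1n.
Qed.

Lemma cvg_count_gcdb_setT (R : realType) b :
  (fun N => (count_gcdb b setT N)%:R / N%:R ^+ 2 : R) @ \oo --> (1 : R).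
Proof.
apply/cvgrPdist_le => e e_gt0; exists 1%N => // N /= N_gt0.
by rewrite count_gcdb_setT natrX divff ?subrr ?normr0 ?ltW // expf_neq0 // pnatr_eq0 -lt0n.
Qed.

Theorem mainTheorem5 (R : realType) (b : nat) (S : set nat) :
  (0 < b)%N ->
  (fun N : nat => ((count_gcdb b S N)%:R / (N%:R ^+ 2) : R)) @ \oo
    --> zetaS R S b.+1 / zeta R b.+1.
Proof.
move=> b_gt0.
have zeta_inv : moebius_series R b.+1 * zeta R b.+1 = 1.
  rewrite zeta_setT -(cvg_lim _ (cvg_count_gcdb_density R b b_gt0 setT)) //.
  exact: cvg_lim (cvg_count_gcdb_setT R b).
have zeta_neq0 : zeta R b.+1 != 0.
  by apply: contra_eq_neq zeta_inv => ->; rewrite mulr0 eq_sym oner_neq0.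
rewrite mulrC (_ : _^-1 = moebius_series R b.+1); first exact: cvg_count_gcdb_density.
by apply: (mulIf zeta_neq0); rewrite mulVf // zeta_inv.
Qed.
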